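(* Let $I\subset\mathbb R$ be a bounded closed non-degenerate interval, $\xi=\frac12(\min I+\max I)$, and $f:I\to\mathbb R$ measurable. If for some $a,b,c\in\mathbb R$ one has $|f(x)-(ax+b)|\le c|x-\xi|$ for all $x\in I$, then $f\in L^\infty(I)$ and $|\tau_r^f-f(\xi)|\le\frac12c\,\lambda(I)$ for every $r>1$.
   Context: $\lambda$ is Lebesgue measure. For $h\in L^r(I)$ with $r>1$, $\tau_r^h$ denotes the unique real number minimizing $t\mapsto\|h-t\|_{L^r(I)}$. *)

(* Everything is relative to a bounded interval I = [lo, hi]. *)
From Stdlib Require Import Reals Lra ClassicalEpsilon.
Open Scope R_scope.

Definition Icc (lo hi : R) : R -> Prop := fun x => lo <= x <= hi.

Definition subset (A B : R -> Prop) : Prop := forall x, A x -> B x.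

Definition is_inf (E : R -> Prop) (m : R) : Prop :=
  (forall s, E s -> m <= s) /\ (forall m', (forall s, E s -> m' <= s) -> m' <= m).

Definition cover_length (A : R -> Prop) (s : R) : Prop :=
  exists a b : nat -> R,
    (forall n, a n <= b n) /\
    (forall x, A x -> exists n, a n < x < b n) /\
    Un_cv (fun N => sum_f_R0 (fun n => b n - a n) N) s.

(* Lebesgue outer measure (meaningful for bounded sets, the only use here) *)
Definition outer (A : R -> Prop) : R :=
  epsilon (inhabits 0) (fun m => is_inf (cover_length A) m).

Definition measurable_in (I E : R -> Prop) : Prop :=
  subset E I /\
  forall A, subset A I ->
    outer A = outer (fun x => A x /\ E x) + outer (fun x => A x /\ ~ E x).

Definition measurable_fun (I : R -> Prop) (f : R -> R) : Prop :=
  forall s, measurable_in I (fun x => I x /\ s < f x).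

Definition simple_below (I : R -> Prop) (g : R -> R) (v : R) : Prop :=
  exists (n : nat) (c : nat -> R) (E : nat -> R -> Prop),
    (forall i, (i < n)%nat ->
       0 <= c i /\ measurable_in I (E i) /\ (forall x, E i x -> c i <= g x)) /\
    (forall i j x, (i < j < n)%nat -> E i x -> E j x -> False) /\
    v = sum_f_R0 (fun i => c i * outer (E i)) (pred n) /\ (0 < n)%nat.

Definition integral (I : R -> Prop) (g : R -> R) : R :=
  epsilon (inhabits 0) (fun L => is_lub (simple_below I g) L).

(* |y|^p for real p > 0, with 0^p = 0 *)
Definition abs_pow (y p : R) : R :=
  if Req_EM_T y 0 then 0 else Rpower (Rabs y) p.

Definition Lr_norm (r : R) (I : R -> Prop) (h : R -> R) : R :=
  abs_pow (integral I (fun x => abs_pow (h x) r)) (/ r).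

(* t minimizes  s |-> || h - s ||_{L^r(I)}  ; tau_r^h is the (unique) such t *)
Definition is_tau (r : R) (I : R -> Prop) (h : R -> R) (t : R) : Prop :=
  forall s, Lr_norm r I (fun x => h x - t) <= Lr_norm r I (fun x => h x - s).

Definition in_Linfty (I : R -> Prop) (h : R -> R) : Prop :=
  measurable_fun I h /\
  exists M, outer (fun x => I x /\ M < Rabs (h x)) = 0.

From Stdlib Require Import Reals Lra Lia List FunctionalExtensionality PropExtensionality ClassicalEpsilon Classical.
Open Scope R_scope.

(* Write xi for the centre of I and delta = c lambda(I) / 2.  The envelope forces f(xi) = a xi + b,
   hence f(x) + f(2 xi - x) <= 2 (f(xi) + delta) on I, and f stays below any level above
   f(xi) + delta on a neighbourhood of xi.  If the minimiser tau exceeded f(xi) + delta, take a level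
   s strictly in between.  For u + v <= 2 s, convexity of |.|^r gives
   |u - s|^r + |v - s|^r <= |u - tau|^r + |v - tau|^r, with a gain of 2 |tau - s|^r when u, v <= s.
   Pairing each x with its mirror image 2 xi - x, which preserves Lebesgue measure, and controlling
   the integrals by step functions on measurable level sets of f, yields
   int |f - s|^r < int |f - tau|^r, contradicting minimality.  The lower bound follows for -f. *)

Fixpoint fsum (n : nat) (g : nat -> R) : R :=
  match n with O => 0 | S n' => fsum n' g + g n' end.

Lemma fsum_ext n g h : (forall i, (i < n)%nat -> g i = h i) -> fsum n g = fsum n h.
Proof. induction n; simpl; intros H; auto. rewrite IHn, H; auto. Qed.

Lemma fsum_le n g h : (forall i, (i < n)%nat -> g i <= h i) -> fsum n g <= fsum n h.
Proof.
  induction n; simpl; intros H; [lra|].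
  specialize (IHn (fun i Hi => H i ltac:(lia))). specialize (H n ltac:(lia)). lra.
Qed.

Lemma fsum_plus n g h : fsum n (fun i => g i + h i) = fsum n g + fsum n h.
Proof. induction n; simpl; [lra|]. rewrite IHn; lra. Qed.

Lemma fsum_minus n g h : fsum n (fun i => g i - h i) = fsum n g - fsum n h.
Proof. induction n; simpl; [lra|]. rewrite IHn; lra. Qed.

Lemma fsum_scal n c g : fsum n (fun i => c * g i) = c * fsum n g.
Proof. induction n; simpl; [lra|]. rewrite IHn; lra. Qed.

Lemma fsum_exchange n m g :
  fsum n (fun i => fsum m (fun j => g i j)) = fsum m (fun j => fsum n (fun i => g i j)).
Proof.
  induction n; simpl.
  - induction m; simpl; auto. rewrite <- IHm; lra.
  - rewrite IHn, <- fsum_plus. reflexivity.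
Qed.

Lemma sum_f_R0_fsum n g : (0 < n)%nat -> sum_f_R0 g (pred n) = fsum n g.
Proof.
  destruct n as [|n]; [lia|]; intros _; simpl.
  induction n; simpl; [lra|]. rewrite IHn; reflexivity.
Qed.

(** * Lebesgue outer measure *)

Lemma partial_sums_le_cover_length (a b : nat -> R) s :
  (forall n, a n <= b n) -> Un_cv (fun N => sum_f_R0 (fun n => b n - a n) N) s ->
  forall N, sum_f_R0 (fun n => b n - a n) N <= s.
Proof.
  intros Hab Hcv N. apply growing_ineq; auto.
  intro n; simpl. specialize (Hab (S n)); lra.
Qed.

Lemma cover_length_nonneg A s : cover_length A s -> 0 <= s.
Proof.
  intros (a & b & Hab & _ & Hcv).
  pose proof (partial_sums_le_cover_length a b s Hab Hcv 0) as H; simpl in H.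
  specialize (Hab 0%nat); lra.
Qed.

Lemma cover_length_Icc A lo hi : lo <= hi -> subset A (Icc lo hi) -> cover_length A (hi - lo + 2).
Proof.
  intros Hlh HA.
  exists (fun n => match n with O => lo - 1 | _ => 0 end).
  exists (fun n => match n with O => hi + 1 | _ => 0 end).
  split; [|split].
  - intros [|n]; lra.
  - intros x Hx; exists O; specialize (HA x Hx); unfold Icc in HA; lra.
  - intros e He; exists O; intros n _.
    replace (sum_f_R0 _ n) with (hi - lo + 2).
    + unfold R_dist; rewrite Rminus_diag, Rabs_R0; lra.
    + induction n; simpl; [lra|]. rewrite <- IHn; lra.
Qed.

Lemma outer_is_inf A : (exists s, cover_length A s) -> is_inf (cover_length A) (outer A).
Proof.
  intros Hex. apply (epsilon_spec (inhabits 0) (fun m => is_inf (cover_length A) m)).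
  set (E := fun y => cover_length A (- y)).
  assert (Hb : bound E) by (exists 0; intros y Hy; apply cover_length_nonneg in Hy; lra).
  assert (Hne : exists y, E y).
  { destruct Hex as [s Hs]; exists (- s); unfold E; rewrite Ropp_involutive; auto. }
  destruct (completeness E Hb Hne) as [m [Hub Hlub]].
  exists (- m); split.
  - intros s Hs. assert (E (- s)) by (unfold E; rewrite Ropp_involutive; auto).
    specialize (Hub _ H); lra.
  - intros m' Hm'. assert (is_upper_bound E (- m')) by (intros y Hy; specialize (Hm' _ Hy); lra).
    specialize (Hlub _ H); lra.
Qed.

Lemma outer_nonneg A : (exists s, cover_length A s) -> 0 <= outer A.
Proof.
  intros Hex; apply (outer_is_inf A Hex).
  intros s Hs; exact (cover_length_nonneg _ _ Hs).
Qed.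

Lemma outer_le_cover_length A s : cover_length A s -> outer A <= s.
Proof. intros Hs; apply (outer_is_inf A (ex_intro _ s Hs)); auto. Qed.

Lemma outer_ext A B : (forall x, A x <-> B x) -> outer A = outer B.
Proof.
  intros H. replace A with B; [reflexivity|].
  apply functional_extensionality; intro x; apply propositional_extensionality; firstorder.
Qed.

Lemma outer_mono A B : subset A B -> (exists s, cover_length B s) -> outer A <= outer B.
Proof.
  intros HAB Hex.
  apply (outer_is_inf B Hex). intros s (a & b & Ha & Hb & Hc).
  apply outer_le_cover_length. exists a, b; repeat split; auto.
Qed.

Lemma outer_empty A : (forall x, ~ A x) -> outer A = 0.
Proof.
  intros HA.
  assert (H0 : cover_length A 0).
  { exists (fun _ => 0), (fun _ => 0); split; [intros; lra|split].
    - intros x Hx; exfalso; exact (HA x Hx).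
    - intros e He; exists O; intros n _.
      replace (sum_f_R0 _ n) with 0.
      + unfold R_dist; rewrite Rminus_diag, Rabs_R0; lra.
      + induction n; simpl; [lra|]. rewrite <- IHn; lra. }
  pose proof (outer_le_cover_length _ _ H0). pose proof (outer_nonneg A (ex_intro _ 0 H0)). lra.
Qed.

Definition mirror (c : R) (A : R -> Prop) : R -> Prop := fun x => A (2 * c - x).

Lemma mirror_involutive c A x : mirror c (mirror c A) x <-> A x.
Proof. unfold mirror; replace (2 * c - (2 * c - x)) with x by ring; tauto. Qed.

Lemma cover_length_mirror c A s : cover_length A s -> cover_length (mirror c A) s.
Proof.
  intros (a & b & Hab & Hcov & Hcv).
  exists (fun n => 2 * c - b n), (fun n => 2 * c - a n); split; [|split].
  - intro n; specialize (Hab n); lra.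
  - intros x Hx; destruct (Hcov _ Hx) as [n Hn]; exists n; lra.
  - intros e He; destruct (Hcv e He) as [N HN]; exists N; intros n Hn.
    rewrite (sum_eq _ (fun n => b n - a n)) by (intros; ring); auto.
Qed.

Lemma outer_mirror c A : outer (mirror c A) = outer A.
Proof.
  unfold outer. replace (cover_length (mirror c A)) with (cover_length A); [reflexivity|].
  apply functional_extensionality; intro s; apply propositional_extensionality; split.
  - apply cover_length_mirror.
  - intro H; apply cover_length_mirror with (c := c) in H.
    replace A with (mirror c (mirror c A)); auto.
    apply functional_extensionality; intro x; apply propositional_extensionality, mirror_involutive.
Qed.

Section FiniteCover.
Variables a b : nat -> R.
Hypothesis Hab : forall n, a n <= b n.

Definition sum_lengths (l : list nat) : R := fold_right (fun n acc => b n - a n + acc) 0 l.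

Lemma sum_lengths_nonneg l : 0 <= sum_lengths l.
Proof. induction l as [|n l IH]; simpl; [lra|]. specialize (Hab n); lra. Qed.

Lemma sum_lengths_remove_le l n0 :
  In n0 l -> b n0 - a n0 + sum_lengths (remove Nat.eq_dec n0 l) <= sum_lengths l.
Proof.
  induction l as [|x l IH]; simpl; [tauto|]. intros Hin.
  destruct (Nat.eq_dec n0 x) as [->|Hne].
  - destruct (in_dec Nat.eq_dec x l) as [Hi|Hi].
    + specialize (IH Hi). specialize (Hab x); lra.
    + rewrite notin_remove; auto; lra.
  - simpl. destruct Hin as [->|Hi]; [congruence|]. specialize (IH Hi); lra.
Qed.

Lemma sum_lengths_remove l n0 :
  NoDup l -> In n0 l -> sum_lengths l = b n0 - a n0 + sum_lengths (remove Nat.eq_dec n0 l).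
Proof.
  induction 1 as [|x l Hx Hnd IH]; simpl; [tauto|]. intros Hin.
  destruct (Nat.eq_dec n0 x) as [->|Hne].
  - rewrite notin_remove; auto.
  - simpl. destruct Hin as [->|Hi]; [congruence|]. rewrite IH; auto; lra.
Qed.

Lemma NoDup_remove_nat l n0 : NoDup l -> NoDup (remove Nat.eq_dec n0 l).
Proof.
  induction 1; simpl; [constructor|].
  destruct (Nat.eq_dec n0 x); auto. constructor; auto.
  intro Hi; apply in_remove in Hi; tauto.
Qed.

(* The interval containing [q] either reaches below [p] or leaves [[p, a n0]] to be covered
   by the remaining ones. *)
Lemma finite_cover_lt_sum_lengths : forall k (l : list nat) p q, (length l <= k)%nat -> p <= q ->
  (forall x, p <= x <= q -> exists n, In n l /\ a n < x < b n) -> q - p < sum_lengths l.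
Proof.
  induction k; intros l p q Hk Hpq Hcov.
  - destruct l; simpl in Hk; [|lia]. destruct (Hcov q ltac:(lra)) as [n [[] _]].
  - destruct (Hcov q ltac:(lra)) as [n0 [Hin Hq]].
    pose proof (sum_lengths_remove_le l n0 Hin).
    pose proof (sum_lengths_nonneg (remove Nat.eq_dec n0 l)).
    destruct (Rlt_le_dec (a n0) p); [lra|].
    assert (a n0 - p < sum_lengths (remove Nat.eq_dec n0 l)); [|lra].
    apply IHk; auto.
    + pose proof (remove_length_lt Nat.eq_dec l n0 Hin); lia.
    + intros x Hx. destruct (Hcov x ltac:(lra)) as [n [Hn Hxn]].
      exists n; split; auto. apply in_in_remove; auto. intros ->; lra.
Qed.

Lemma sum_lengths_le_partial_sum : forall N l, NoDup l -> (forall n, In n l -> (n < N)%nat) ->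
  sum_lengths l <= fsum N (fun n => b n - a n).
Proof.
  induction N; intros l Hnd Hl; simpl.
  - destruct l as [|n l]; simpl; [lra|]. specialize (Hl n (or_introl eq_refl)); lia.
  - assert (Hrem : sum_lengths (remove Nat.eq_dec N l) <= fsum N (fun n => b n - a n)).
    { apply IHN; [apply NoDup_remove_nat; auto|].
      intros n Hn; apply in_remove in Hn; destruct Hn as [Hn Hne]; specialize (Hl _ Hn); lia. }
    destruct (in_dec Nat.eq_dec N l) as [Hi|Hi].
    + rewrite (sum_lengths_remove l N Hnd Hi); lra.
    + rewrite notin_remove in Hrem; auto. specialize (Hab N); lra.
Qed.

End FiniteCover.

Lemma list_INR_indices (l : list R) : (forall y, In y l -> exists n, y = INR n) ->
  exists L : list nat, forall n, In (INR n) l -> In n L.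
Proof.
  induction l as [|y l IH]; intros H.
  - exists nil; simpl; auto.
  - destruct IH as [L HL]; [intros; apply H; simpl; auto|].
    destruct (H y (or_introl eq_refl)) as [m ->].
    exists (m :: L); intros n [Hn|Hn]; simpl; auto.
    left; apply INR_eq; auto.
Qed.

Lemma list_nat_bounded (L : list nat) : exists N, forall n, In n L -> (n < N)%nat.
Proof.
  induction L as [|x L [N HN]]; [exists O; simpl; tauto|].
  exists (S (Nat.max x N)); intros n [->|Hn]; [lia|]. specialize (HN _ Hn); lia.
Qed.

(* Heine-Borel ([compact_P3]) reduces a countable cover of [p, q] to a finite one. *)
Lemma cover_length_ge_interval A p q s :
  p <= q -> subset (Icc p q) A -> cover_length A s -> q - p <= s.
Proof.
  intros Hpq HA (a & b & Hab & Hcov & Hcv).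
  set (fam := mkfamily (fun i => exists n, i = INR n)
                (fun i x => exists n, i = INR n /\ a n < x < b n)
                (fun i H => match H with ex_intro _ x (ex_intro _ n (conj E _)) => ex_intro _ n E end)).
  assert (Hopen : covering_open_set (fun x => p <= x <= q) fam).
  { split.
    - intros x Hx. destruct (Hcov x (HA x Hx)) as [n Hn]. exists (INR n); simpl; eauto.
    - intros i x [n [-> Hn]].
      assert (Hpos : 0 < Rmin (x - a n) (b n - x)) by (apply Rmin_pos; lra).
      exists (mkposreal _ Hpos); intros y Hy; unfold disc in Hy; simpl in Hy.
      exists n; split; auto.
      pose proof (Rmin_l (x - a n) (b n - x)); pose proof (Rmin_r (x - a n) (b n - x)).
      unfold Rabs in Hy; destruct (Rcase_abs (y - x)); lra. }
  destruct (compact_P3 p q fam Hopen) as [D [Hsub [l Hl]]].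
  destruct (list_INR_indices l) as [L HL].
  { intros y Hy; apply Hl in Hy; destruct Hy as [[n Hn] _]; eauto. }
  destruct (list_nat_bounded (nodup Nat.eq_dec L)) as [N HN].
  assert (Hlt : q - p < sum_lengths a b (nodup Nat.eq_dec L)).
  { apply (finite_cover_lt_sum_lengths a b Hab (length (nodup Nat.eq_dec L))); auto.
    intros x Hx. destruct (Hsub x Hx) as [y [[n [-> Hn]] HD]].
    exists n; split; auto. apply nodup_In, HL, Hl. split; auto. exists n; auto. }
  pose proof (sum_lengths_le_partial_sum a b Hab N _ (NoDup_nodup _ _) HN).
  destruct N as [|N]; [simpl in *; lra|].
  pose proof (partial_sums_le_cover_length a b s Hab Hcv N).
  rewrite <- sum_f_R0_fsum in * by lia. simpl in *. lra.
Qed.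

Lemma outer_ge_interval A p q :
  p <= q -> subset (Icc p q) A -> (exists s, cover_length A s) -> q - p <= outer A.
Proof.
  intros Hpq HA Hex. apply (outer_is_inf A Hex).
  intros s Hs; eapply cover_length_ge_interval; eauto.
Qed.

Record measurable_partition (I : R -> Prop) (m : nat) (C : nat -> R -> Prop) : Prop := {
  cell_measurable : forall j, (j < m)%nat -> measurable_in I (C j);
  cell_disjoint : forall i j x, (i < j < m)%nat -> C i x -> C j x -> False;
  cell_cover : forall x, I x -> exists j, (j < m)%nat /\ C j x }.

Section MeasurableSets.
Variables lo hi : R.
Hypothesis Hlh : lo <= hi.
Let I := Icc lo hi.

Lemma cover_length_exists A : subset A I -> exists s, cover_length A s.
Proof. intros H; exists (hi - lo + 2); apply cover_length_Icc; auto. Qed.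

Lemma outer_nonneg_Icc A : subset A I -> 0 <= outer A.
Proof. intros; apply outer_nonneg, cover_length_exists; auto. Qed.

Lemma outer_mono_Icc A B : subset A B -> subset B I -> outer A <= outer B.
Proof. intros; apply outer_mono, cover_length_exists; auto. Qed.

Lemma outer_le_Icc A : subset A I -> outer A <= hi - lo + 2.
Proof. intros H; apply outer_le_cover_length, cover_length_Icc; auto. Qed.

Lemma measurable_Icc : measurable_in I I.
Proof.
  split; [intros x H; auto|]. intros A HA.
  rewrite (outer_empty (fun x => A x /\ ~ I x)) by (intros x [H1 H2]; apply H2, HA; auto).
  rewrite Rplus_0_r. apply outer_ext; intro x; split; [intro H; split; auto; apply HA; auto|tauto].
Qed.

Lemma measurable_diff U V : measurable_in I U -> measurable_in I V -> subset V U ->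
  measurable_in I (fun x => U x /\ ~ V x).
Proof.
  intros [HUs HU] [HVs HV] HVU; split.
  - intros x [Hx _]; auto.
  - intros A HA.
    rewrite (HU A HA).
    assert (HAU : subset (fun x => A x /\ U x) I) by (intros x [Hx _]; auto).
    rewrite (HV _ HAU).
    assert (HAC : subset (fun x => A x /\ ~ (U x /\ ~ V x)) I) by (intros x [Hx _]; auto).
    rewrite (HU _ HAC).
    rewrite (outer_ext (fun x => (A x /\ U x) /\ V x) (fun x => (A x /\ ~ (U x /\ ~ V x)) /\ U x)).
    2:{ intro x; split; [intros [[? ?] ?]; repeat split; tauto|].
        intros [[Ha Hn] Hu]; repeat split; auto. apply NNPP; intro; apply Hn; auto. }
    rewrite (outer_ext (fun x => (A x /\ U x) /\ ~ V x) (fun x => A x /\ (U x /\ ~ V x))) by (intro; tauto).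
    rewrite (outer_ext (fun x => A x /\ ~ U x) (fun x => (A x /\ ~ (U x /\ ~ V x)) /\ ~ U x)) by (intro; tauto).
    lra.
Qed.

Lemma Icc_mirror x : I x -> I (2 * ((lo + hi) / 2) - x).
Proof. unfold I, Icc; lra. Qed.

Lemma measurable_mirror E : measurable_in I E -> measurable_in I (mirror ((lo + hi) / 2) E).
Proof.
  set (c := (lo + hi) / 2). intros [HEs HE]; split.
  - intros x Hx. apply (mirror_involutive c I), Icc_mirror, HEs, Hx.
  - intros A HA.
    assert (HRA : subset (mirror c A) I) by (intros x Hx; apply (mirror_involutive c I), Icc_mirror, HA, Hx).
    rewrite <- (outer_mirror c A), (HE _ HRA).
    rewrite <- (outer_mirror c (fun x => mirror c A x /\ E x)),
            <- (outer_mirror c (fun x => mirror c A x /\ ~ E x)).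
    f_equal; apply outer_ext; intro x; unfold mirror;
      replace (2 * c - (2 * c - x)) with x by ring; tauto.
Qed.

Lemma outer_additive (n : nat) (D : nat -> R -> Prop) (A : R -> Prop) :
  (forall k, (k < n)%nat -> measurable_in I (D k)) ->
  (forall i j x, (i < j < n)%nat -> D i x -> D j x -> False) ->
  subset A I -> (forall x, A x -> exists k, (k < n)%nat /\ D k x) ->
  outer A = fsum n (fun k => outer (fun x => A x /\ D k x)).
Proof.
  revert A; induction n; intros A Hm Hd HA Hc; simpl.
  - apply outer_empty; intros x Hx; destruct (Hc x Hx) as [k [Hk _]]; lia.
  - destruct (Hm n ltac:(lia)) as [_ HDn].
    rewrite (HDn A HA), (IHn (fun x => A x /\ ~ D n x)).
    + rewrite Rplus_comm; f_equal. apply fsum_ext; intros i Hi; apply outer_ext; intro x.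
      split; [tauto|]. intros [Ha Hdi]; repeat split; auto. intro Hdn; exact (Hd i n x ltac:(lia) Hdi Hdn).
    + intros; apply Hm; lia.
    + intros i j x Hij; apply Hd; lia.
    + intros x [Hx _]; auto.
    + intros x [Hx Hn]; destruct (Hc x Hx) as [k [Hk Hdk]].
      exists k; split; auto. destruct (Nat.eq_dec k n); [subst; tauto|lia].
Qed.

Lemma outer_partition m C A : measurable_partition I m C -> subset A I ->
  outer A = fsum m (fun j => outer (fun x => A x /\ C j x)).
Proof.
  intros HC HA. apply outer_additive; auto; try apply HC.
  intros x Hx; apply (cell_cover _ _ _ HC), HA, Hx.
Qed.

End MeasurableSets.

(** * The function [y |-> |y|^r] for [r > 1] *)

Lemma abs_pow_lt u v p : 0 < p -> 0 <= u < v -> abs_pow u p < abs_pow v p.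
Proof.
  intros Hp [Hu Huv]. unfold abs_pow.
  destruct (Req_EM_T u 0), (Req_EM_T v 0); try lra.
  - unfold Rpower; apply exp_pos.
  - rewrite !Rabs_pos_eq by lra. apply Rlt_Rpower_l; lra.
Qed.

Section AbsPow.
Variable r : R.
Hypothesis Hr : 1 < r.

Lemma abs_pow_Rabs y : abs_pow (Rabs y) r = abs_pow y r.
Proof.
  unfold abs_pow. rewrite Rabs_Rabsolu.
  destruct (Req_EM_T (Rabs y) 0) as [H|H], (Req_EM_T y 0) as [H'|H']; auto.
  - exfalso; apply H'. destruct (Req_dec y 0); auto. apply Rabs_no_R0 in H0; contradiction.
  - subst; rewrite Rabs_R0 in H; lra.
Qed.

Lemma abs_pow_opp y : abs_pow (- y) r = abs_pow y r.
Proof. rewrite <- abs_pow_Rabs, Rabs_Ropp, abs_pow_Rabs; auto. Qed.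

Lemma abs_pow_nonneg y : 0 <= abs_pow y r.
Proof. unfold abs_pow; destruct (Req_EM_T y 0); [lra|]. unfold Rpower; left; apply exp_pos. Qed.

Lemma abs_pow_Rpower y : 0 < y -> abs_pow y r = Rpower y r.
Proof. intros H; unfold abs_pow; destruct (Req_EM_T y 0); [lra|]. rewrite Rabs_pos_eq; lra. Qed.

Lemma abs_pow_0 : abs_pow 0 r = 0.
Proof. unfold abs_pow; destruct (Req_EM_T 0 0); lra. Qed.

Lemma abs_pow_le x y : 0 <= x <= y -> abs_pow x r <= abs_pow y r.
Proof.
  intros [H0 H1]. destruct (Req_dec x 0) as [->|Hx].
  - rewrite abs_pow_0; apply abs_pow_nonneg.
  - rewrite !abs_pow_Rpower by lra. apply Rle_Rpower_l; lra.
Qed.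

Lemma Rpower_le_self l : 0 < l <= 1 -> Rpower l r <= l.
Proof.
  intros Hl. unfold Rpower. rewrite <- (exp_ln l) at 2 by lra.
  assert (Hln : ln l <= 0).
  { destruct (Req_dec l 1) as [->|]; [rewrite ln_1; lra|].
    left; rewrite <- ln_1; apply ln_increasing; lra. }
  destruct Hln as [Hlt|Heq]; [left; apply exp_increasing; nra|rewrite Heq, Rmult_0_r; lra].
Qed.

Lemma abs_pow_superadd x y : 0 <= x -> 0 <= y -> abs_pow x r + abs_pow y r <= abs_pow (x + y) r.
Proof.
  intros Hx Hy.
  destruct (Req_dec x 0) as [->|Hx0]; [rewrite abs_pow_0, !Rplus_0_l; lra|].
  destruct (Req_dec y 0) as [->|Hy0]; [rewrite abs_pow_0, !Rplus_0_r; lra|].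
  rewrite !abs_pow_Rpower by lra.
  (* scale by [x + y] and use [t^r <= t] on [(0, 1]] *)
  assert (Hscale : forall z, 0 < z -> Rpower z r = Rpower (z / (x + y)) r * Rpower (x + y) r).
  { intros z Hz. rewrite Rpower_mult_distr by (try apply Rdiv_lt_0_compat; lra). f_equal; field; lra. }
  rewrite (Hscale x), (Hscale y) by lra.
  assert (Hsum : x / (x + y) + y / (x + y) = 1) by (field; lra).
  assert (0 < x / (x + y)) by (apply Rdiv_lt_0_compat; lra).
  assert (0 < y / (x + y)) by (apply Rdiv_lt_0_compat; lra).
  pose proof (Rpower_le_self (x / (x + y)) ltac:(lra)).
  pose proof (Rpower_le_self (y / (x + y)) ltac:(lra)).
  assert (0 < Rpower (x + y) r) by (unfold Rpower; apply exp_pos).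
  nra.
Qed.

Lemma derivable_pt_lim_Rpower_shift h z : 0 < z + h ->
  derivable_pt_lim (fun z => Rpower (z + h) r) z (r * Rpower (z + h) (r - 1)).
Proof.
  intros Hz.
  replace (r * Rpower (z + h) (r - 1)) with (r * Rpower (z + h) (r - 1) * 1) by ring.
  apply (derivable_pt_lim_comp (fun z => z + h) (fun x => Rpower x r)).
  - replace 1 with (1 + 0) by ring.
    apply derivable_pt_lim_plus; [apply derivable_pt_lim_id|apply derivable_pt_lim_const].
  - apply derivable_pt_lim_power; auto.
Qed.

Lemma abs_pow_increment_le y x h : 0 <= y <= x -> 0 <= h ->
  abs_pow (y + h) r - abs_pow y r <= abs_pow (x + h) r - abs_pow x r.
Proof.
  intros [Hy Hyx] Hh.
  destruct (Req_dec y 0) as [->|Hy0].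
  { rewrite Rplus_0_l, abs_pow_0. pose proof (abs_pow_superadd x h); lra. }
  destruct (Req_dec h 0) as [->|Hh0]; [rewrite !Rplus_0_r; lra|].
  destruct (Req_dec y x) as [->|Hyx0]; [lra|].
  rewrite !abs_pow_Rpower by lra.
  destruct (MVT_cor2 (fun z => Rpower (z + h) r - Rpower (z + 0) r)
              (fun z => r * Rpower (z + h) (r - 1) - r * Rpower (z + 0) (r - 1)) y x)
    as [c [Hc1 Hc2]].
  - lra.
  - intros c Hc. apply derivable_pt_lim_minus; apply derivable_pt_lim_Rpower_shift; lra.
  - rewrite !Rplus_0_r in Hc1.
    assert (Rpower c (r - 1) <= Rpower (c + h) (r - 1)) by (apply Rle_Rpower_l; lra).
    assert (0 <= (r * Rpower (c + h) (r - 1) - r * Rpower c (r - 1)) * (x - y))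
      by (apply Rmult_le_pos; nra).
    lra.
Qed.

Lemma abs_pow_lipschitz_nonneg y x K : 0 <= y <= x -> x <= K ->
  abs_pow x r - abs_pow y r <= r * Rpower K (r - 1) * (x - y).
Proof.
  intros [Hy Hyx] HK.
  destruct (Req_dec y x) as [->|Hne]; [rewrite Rminus_diag; nra|].
  assert (HKp : 0 <= Rpower K (r - 1)) by (unfold Rpower; left; apply exp_pos).
  destruct (Req_dec y 0) as [->|Hy0].
  - rewrite abs_pow_0, abs_pow_Rpower by lra.
    assert (E : Rpower x r = x * Rpower x (r - 1)).
    { rewrite <- (Rpower_1 x) at 2 by lra. rewrite <- Rpower_plus. f_equal; ring. }
    rewrite E.
    assert (Rpower x (r - 1) <= Rpower K (r - 1)) by (apply Rle_Rpower_l; lra).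
    assert (0 <= Rpower x (r - 1)) by (unfold Rpower; left; apply exp_pos).
    assert (x * Rpower x (r - 1) <= x * Rpower K (r - 1)) by (apply Rmult_le_compat_l; lra).
    assert (0 <= (r - 1) * (x * Rpower K (r - 1))) by (apply Rmult_le_pos; [lra|apply Rmult_le_pos; lra]).
    lra.
  - rewrite !abs_pow_Rpower by lra.
    destruct (MVT_cor2 (fun z => Rpower (z + 0) r) (fun z => r * Rpower (z + 0) (r - 1)) y x)
      as [c [Hc1 Hc2]].
    + lra.
    + intros c Hc; apply derivable_pt_lim_Rpower_shift; lra.
    + rewrite !Rplus_0_r in Hc1. rewrite Hc1.
      assert (Rpower c (r - 1) <= Rpower K (r - 1)) by (apply Rle_Rpower_l; lra).
      apply Rmult_le_compat_r; [lra|]. apply Rmult_le_compat_l; lra.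
Qed.

Lemma lipschitz_constant_nonneg K : 0 <= r * Rpower K (r - 1).
Proof. unfold Rpower; pose proof (exp_pos ((r - 1) * ln K)); nra. Qed.

Lemma abs_pow_lipschitz u v K : Rabs u <= K -> Rabs v <= K ->
  Rabs (abs_pow u r - abs_pow v r) <= r * Rpower K (r - 1) * Rabs (u - v).
Proof.
  intros Hu Hv.
  rewrite <- (abs_pow_Rabs u), <- (abs_pow_Rabs v).
  assert (Hd : Rabs (Rabs u - Rabs v) <= Rabs (u - v)) by apply Rabs_triang_inv2.
  pose proof (lipschitz_constant_nonneg K).
  pose proof (Rabs_pos u); pose proof (Rabs_pos v).
  destruct (Rle_dec (Rabs v) (Rabs u)).
  - pose proof (abs_pow_lipschitz_nonneg (Rabs v) (Rabs u) K ltac:(lra) Hu).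
    pose proof (abs_pow_le (Rabs v) (Rabs u) ltac:(lra)).
    rewrite Rabs_pos_eq by lra. rewrite Rabs_pos_eq in Hd by lra. nra.
  - pose proof (abs_pow_lipschitz_nonneg (Rabs u) (Rabs v) K ltac:(lra) Hv).
    pose proof (abs_pow_le (Rabs u) (Rabs v) ltac:(lra)).
    rewrite Rabs_left1 by lra. rewrite Rabs_left1 in Hd by lra. nra.
Qed.

Lemma abs_pow_pair_le_sorted u v s t : u <= v -> s <= t -> u + v <= 2 * s ->
  abs_pow (u - s) r + abs_pow (v - s) r <= abs_pow (u - t) r + abs_pow (v - t) r.
Proof.
  intros Huv Hst Hs.
  set (p := s - u). set (d := t - s). set (w := v - s).
  assert (Hp : 0 <= p) by (unfold p; lra). assert (Hd : 0 <= d) by (unfold d; lra).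
  assert (Hw : w <= p) by (unfold w, p; lra).
  replace (u - s) with (- p) by (unfold p; ring). replace (u - t) with (- (p + d)) by (unfold p, d; ring).
  replace (v - s) with w by (unfold w; ring). replace (v - t) with (w - d) by (unfold w, d; ring).
  rewrite !abs_pow_opp.
  assert (Hpd : abs_pow p r <= abs_pow (p + d) r) by (apply abs_pow_le; lra).
  destruct (Rle_dec w 0).
  - rewrite <- (abs_pow_opp w), <- (abs_pow_opp (w - d)).
    assert (abs_pow (- w) r <= abs_pow (- (w - d)) r) by (apply abs_pow_le; lra). lra.
  - destruct (Rle_dec w d).
    + pose proof (abs_pow_superadd p d Hp Hd).
      pose proof (abs_pow_le w d ltac:(lra)). pose proof (abs_pow_nonneg (w - d)). lra.
    + pose proof (abs_pow_increment_le (w - d) p d ltac:(lra) Hd).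
      replace (w - d + d) with w in H by ring. lra.
Qed.

Lemma abs_pow_pair_le u v s t : s <= t -> u + v <= 2 * s ->
  abs_pow (u - s) r + abs_pow (v - s) r <= abs_pow (u - t) r + abs_pow (v - t) r.
Proof.
  intros Hst Hs. destruct (Rle_dec u v).
  - apply abs_pow_pair_le_sorted; auto.
  - pose proof (abs_pow_pair_le_sorted v u s t ltac:(lra) Hst ltac:(lra)). lra.
Qed.

Lemma abs_pow_gap u s t : u <= s -> s <= t -> abs_pow (u - s) r + abs_pow (t - s) r <= abs_pow (u - t) r.
Proof.
  intros H1 H2. rewrite <- (abs_pow_opp (u - s)), <- (abs_pow_opp (u - t)).
  replace (- (u - t)) with ((- (u - s)) + (t - s)) by ring.
  apply abs_pow_superadd; lra.
Qed.

End AbsPow.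

(** * Integrals of bounded functions and step approximations *)

Lemma integral_bounds I g U v : (forall w, simple_below I g w -> w <= U) -> simple_below I g v ->
  v <= integral I g <= U.
Proof.
  intros HU Hv.
  assert (Hex : exists L, is_lub (simple_below I g) L).
  { destruct (completeness (simple_below I g)) as [L HL]; [exists U; intros w Hw; auto|exists v; auto|].
    exists L; auto. }
  pose proof (epsilon_spec (inhabits 0) (fun L => is_lub (simple_below I g) L) Hex) as [H1 H2].
  unfold integral; split; [apply H1; auto|apply H2; intros w Hw; auto].
Qed.

Section StepSums.
Variables lo hi : R.
Hypothesis Hlh : lo <= hi.
Let I := Icc lo hi.
Variable g : R -> R.

Lemma simple_sum_restrict_le n (c : nat -> R) (E : nat -> R -> Prop) A M :
  (forall i, (i < n)%nat -> 0 <= c i /\ measurable_in I (E i) /\ (forall x, E i x -> c i <= g x)) ->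
  (forall i j x, (i < j < n)%nat -> E i x -> E j x -> False) ->
  subset A I -> 0 <= M -> (forall x, A x -> g x <= M) ->
  fsum n (fun i => c i * outer (fun x => E i x /\ A x)) <= M * outer A.
Proof.
  intros HE HEd HA HM0 HM.
  set (AE := fun x => A x /\ exists i, (i < n)%nat /\ E i x).
  assert (Hsplit : outer AE = fsum n (fun i => outer (fun x => AE x /\ E i x))).
  { apply (outer_additive lo hi).
    - intros i Hi; apply (HE i Hi).
    - exact HEd.
    - intros x [Hx _]; apply HA; auto.
    - intros x [_ H]; auto. }
  assert (HAE : outer AE <= outer A) by (apply (outer_mono_Icc lo hi Hlh); [intros x [Hx _]|]; auto).
  apply Rle_trans with (M * outer AE); [|apply Rmult_le_compat_l; auto].
  rewrite Hsplit, <- fsum_scal. apply fsum_le; intros i Hi.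
  destruct (HE i Hi) as [Hc0 [[HEs _] Hcg]].
  rewrite (outer_ext (fun x => AE x /\ E i x) (fun x => E i x /\ A x)).
  2:{ intro x; unfold AE; split; [tauto|]. intros [H1 H2]; split; [split|]; eauto. }
  destruct (classic (exists x, E i x /\ A x)) as [[x [Hx1 Hx2]]|Hne].
  - apply Rmult_le_compat_r.
    + apply (outer_nonneg_Icc lo hi Hlh); intros y [Hy _]; apply HEs; auto.
    + apply Rle_trans with (g x); auto.
  - rewrite outer_empty; [lra|]. intros x Hx; apply Hne; eauto.
Qed.

Variables (m : nat) (C : nat -> R -> Prop).
Hypothesis HC : measurable_partition I m C.

Lemma cell_subset j : (j < m)%nat -> subset (C j) I.
Proof. intros Hj; exact (proj1 (cell_measurable _ _ _ HC j Hj)). Qed.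

Lemma simple_below_le_step_sum (M : nat -> R) :
  (forall j, (j < m)%nat -> 0 <= M j) ->
  (forall j x, (j < m)%nat -> C j x -> g x <= M j) ->
  forall w, simple_below I g w -> w <= fsum m (fun j => M j * outer (C j)).
Proof.
  intros HM0 HM w (n & c & E & HE & HEd & -> & Hn).
  rewrite sum_f_R0_fsum by auto.
  rewrite (fsum_ext n _ (fun i => fsum m (fun j => c i * outer (fun x => E i x /\ C j x)))).
  2:{ intros i Hi. rewrite fsum_scal, <- (outer_partition lo hi); auto.
      apply (HE i Hi). }
  rewrite fsum_exchange. apply fsum_le; intros j Hj.
  apply simple_sum_restrict_le; auto. apply cell_subset; auto.
Qed.

Lemma step_sum_simple_below (c : nat -> R) :
  (0 < m)%nat -> (forall j, (j < m)%nat -> 0 <= c j) ->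
  (forall j x, (j < m)%nat -> C j x -> c j <= g x) ->
  simple_below I g (fsum m (fun j => c j * outer (C j))).
Proof.
  intros Hm Hc0 Hc. exists m, c, C. split; [|split; [|split]]; auto.
  - intros i Hi; split; [auto|split; [apply (cell_measurable _ _ _ HC); auto|]].
    intros x Hx; apply Hc; auto.
  - apply HC.
  - rewrite sum_f_R0_fsum; auto.
Qed.

Lemma partition_size_pos : (0 < m)%nat.
Proof. destruct (cell_cover _ _ _ HC lo) as [j [Hj _]]; [unfold I, Icc; lra|lia]. Qed.

Lemma integral_between_step_sums (c M : nat -> R) :
  (forall j, (j < m)%nat -> 0 <= c j <= M j) ->
  (forall j x, (j < m)%nat -> C j x -> c j <= g x <= M j) ->
  fsum m (fun j => c j * outer (C j)) <= integral I g <= fsum m (fun j => M j * outer (C j)).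
Proof.
  intros HcM Hcg. apply integral_bounds.
  - apply simple_below_le_step_sum.
    + intros j Hj; specialize (HcM j Hj); lra.
    + intros j x Hj Hx; apply (Hcg j x Hj Hx).
  - apply step_sum_simple_below; [apply partition_size_pos| |].
    + intros j Hj; apply (HcM j Hj).
    + intros j x Hj Hx; apply (Hcg j x Hj Hx).
Qed.

End StepSums.

Definition step_approx (I : R -> Prop) (g : R -> R) : Prop :=
  forall d, 0 < d -> exists m (C : nat -> R -> Prop) (z : nat -> R),
    measurable_partition I m C /\ forall j x, (j < m)%nat -> C j x -> z j <= g x <= z j + d.

Lemma step_approx_opp I g : step_approx I g -> step_approx I (fun x => - g x).
Proof.
  intros Hg d Hd. destruct (Hg d Hd) as (m & C & z & HC & Hz).
  exists m, C, (fun j => - z j - d); split; auto.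
  intros j x Hj Hx; specialize (Hz j x Hj Hx); lra.
Qed.

(* cells are the level sets [{al j < f <= al j + d}] of a grid starting below [-B] *)
Lemma measurable_bounded_step_approx lo hi f B : lo <= hi -> measurable_fun (Icc lo hi) f ->
  (forall x, Icc lo hi x -> Rabs (f x) <= B) -> step_approx (Icc lo hi) f.
Proof.
  intros Hlh Hf HB d Hd.
  set (al := fun j => - B - 1 + INR j * d).
  set (U := fun j x => Icc lo hi x /\ al j < f x).
  assert (Hal : forall j, al (S j) = al j + d) by (intro j; unfold al; rewrite S_INR; ring).
  assert (Halmono : forall i j, (i <= j)%nat -> al i <= al j).
  { intros i j Hij; unfold al. apply le_INR in Hij. apply Rplus_le_compat_l, Rmult_le_compat_r; lra. }
  destruct (INR_unbounded ((2 * B + 2) / d)) as [m Hm].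
  assert (Htop : forall x, Icc lo hi x -> f x <= al m).
  { intros x Hx. assert (INR m * d > 2 * B + 2).
    { apply Rmult_lt_reg_r with (/ d); [apply Rinv_0_lt_compat; auto|].
      rewrite Rmult_assoc, Rinv_r by lra. rewrite Rmult_1_r. exact Hm. }
    specialize (HB x Hx). unfold al. unfold Rabs in HB; destruct (Rcase_abs (f x)); lra. }
  exists m, (fun j x => U j x /\ ~ U (S j) x), al. split; [split|].
  - intros j Hj. apply (measurable_diff lo hi); [apply Hf|apply Hf|].
    intros x [Hx Hlt]; split; auto. rewrite Hal in Hlt; lra.
  - intros i j x Hij [[Hx1 Hi1] Hi2] [[Hx2 Hj1] Hj2].
    apply Hi2; split; auto. pose proof (Halmono (S i) j ltac:(lia)); lra.
  - intros x Hx.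
    assert (Hlevel : forall n, f x <= al n -> exists j, (j < n)%nat /\ al j < f x <= al (S j)).
    { induction n; intros Hn.
      - exfalso. specialize (HB x Hx). unfold al in Hn; simpl in Hn.
        unfold Rabs in HB; destruct (Rcase_abs (f x)); lra.
      - destruct (Rle_dec (f x) (al n)) as [Hle|Hgt].
        + destruct (IHn Hle) as [j [Hj Hj2]]; exists j; split; auto.
        + exists n; split; auto; lra. }
    destruct (Hlevel m (Htop x Hx)) as [j [Hj [Hj1 Hj2]]].
    exists j; split; auto. split; [split; auto|]. intros [_ H]; lra.
  - intros j x Hj [[Hx H1] H2]. split; [lra|]. rewrite <- Hal.
    apply Rnot_lt_le; intro H; apply H2; split; auto.
Qed.

Lemma integral_nonneg_bounded lo hi g M : lo <= hi -> (forall x, Icc lo hi x -> 0 <= g x <= M) ->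
  0 <= integral (Icc lo hi) g.
Proof.
  intros Hlh Hg.
  assert (Htriv : measurable_partition (Icc lo hi) 1 (fun _ => Icc lo hi)).
  { split; [intros; apply measurable_Icc|intros; lia|intros x Hx; exists O; auto]. }
  assert (HM : 0 <= M) by (specialize (Hg lo ltac:(unfold Icc; lra)); lra).
  pose proof (integral_between_step_sums lo hi Hlh g 1 _ Htriv (fun _ => 0) (fun _ => M)) as H.
  simpl in H. rewrite Rmult_0_l, Rplus_0_l in H. apply H; [intros; lra|auto].
Qed.

Definition abs_pow_integral_minimizer (r : R) (I : R -> Prop) (g : R -> R) (t : R) : Prop :=
  forall s, integral I (fun x => abs_pow (g x - t) r) <= integral I (fun x => abs_pow (g x - s) r).

(* [is_tau] compares the [r]-th roots of the integrals, which are nonnegative here *)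
Lemma is_tau_integral_minimizer lo hi r g B t : lo <= hi -> 1 < r ->
  (forall x, Icc lo hi x -> Rabs (g x) <= B) ->
  is_tau r (Icc lo hi) g t -> abs_pow_integral_minimizer r (Icc lo hi) g t.
Proof.
  intros Hlh Hr HB Htau s. apply Rnot_lt_le; intro Hlt.
  assert (Hnn : 0 <= integral (Icc lo hi) (fun x => abs_pow (g x - s) r)).
  { apply (integral_nonneg_bounded lo hi _ (abs_pow (B + Rabs s) r) Hlh).
    intros x Hx. split; [apply abs_pow_nonneg|].
    rewrite <- abs_pow_Rabs. apply abs_pow_le; auto. split; [apply Rabs_pos|].
    eapply Rle_trans; [apply Rabs_triang|]. rewrite Rabs_Ropp. specialize (HB x Hx); lra. }
  specialize (Htau s). unfold Lr_norm in Htau.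
  pose proof (abs_pow_lt _ _ (/ r) ltac:(apply Rinv_0_lt_compat; lra) (conj Hnn Hlt)). lra.
Qed.

Lemma abs_pow_integral_minimizer_opp r I g t :
  abs_pow_integral_minimizer r I g t -> abs_pow_integral_minimizer r I (fun x => - g x) (- t).
Proof.
  intros Ht s.
  assert (Eopp : forall u, (fun x => abs_pow (- g x - u) r) = (fun x => abs_pow (g x - - u) r)).
  { intro u; apply functional_extensionality; intro x. rewrite <- abs_pow_opp. f_equal; ring. }
  rewrite !Eopp, Ropp_involutive. apply Ht.
Qed.

Section StepError.
Variables lo hi r : R.
Hypothesis Hlh : lo <= hi.
Hypothesis Hr : 1 < r.
Let I := Icc lo hi.
Variables (g : R -> R) (B : R).
Hypothesis HB : forall x, I x -> Rabs (g x) <= B.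
Variables (m : nat) (C : nat -> R -> Prop) (z : nat -> R) (d : R).
Hypothesis HC : measurable_partition I m C.
Hypothesis Hz : forall j x, (j < m)%nat -> C j x -> z j <= g x <= z j + d.
Hypothesis Hd : 0 < d <= 1.
Variables t K : R.
Hypothesis HK : B + 1 + Rabs t <= K.
Let Lam := r * Rpower K (r - 1).

Lemma abs_pow_cell_error j x : (j < m)%nat -> C j x ->
  Rabs (abs_pow (g x - t) r - abs_pow (z j - t) r) <= Lam * d.
Proof.
  intros Hj Hx.
  pose proof (HB x (cell_subset lo hi m C HC j Hj x Hx)) as Hg. pose proof (Hz j x Hj Hx) as Hzj.
  assert (HL : 0 <= Lam) by apply (lipschitz_constant_nonneg r Hr).
  eapply Rle_trans; [apply (abs_pow_lipschitz r Hr _ _ K)|].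
  - eapply Rle_trans; [apply Rabs_triang|]. rewrite Rabs_Ropp. lra.
  - eapply Rle_trans; [apply Rabs_triang|]. rewrite Rabs_Ropp.
    assert (Rabs (z j) <= B + 1).
    { unfold Rabs at 1; destruct (Rcase_abs (z j)); unfold Rabs in Hg; destruct (Rcase_abs (g x)); lra. }
    lra.
  - apply Rmult_le_compat_l; auto.
    replace (g x - t - (z j - t)) with (g x - z j) by ring. rewrite Rabs_pos_eq; lra.
Qed.

Lemma integral_abs_pow_step_bounds :
  fsum m (fun j => (abs_pow (z j - t) r - Lam * d) * outer (C j))
  <= integral I (fun x => abs_pow (g x - t) r)
  <= fsum m (fun j => (abs_pow (z j - t) r + Lam * d) * outer (C j)).
Proof.
  set (c := fun j => Rmax 0 (abs_pow (z j - t) r - Lam * d)).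
  assert (HL : 0 <= Lam * d) by (apply Rmult_le_pos; [apply (lipschitz_constant_nonneg r Hr)|lra]).
  assert (Hbetween := integral_between_step_sums lo hi Hlh (fun x => abs_pow (g x - t) r) m C HC c
                        (fun j => abs_pow (z j - t) r + Lam * d)).
  destruct Hbetween as [Hlow Hup].
  - intros j Hj; split; [apply Rmax_l|]. apply Rmax_lub; [|lra].
    pose proof (abs_pow_nonneg r (z j - t)); lra.
  - intros j x Hj Hx. pose proof (abs_pow_cell_error j x Hj Hx) as Herr.
    pose proof (Rle_abs (abs_pow (g x - t) r - abs_pow (z j - t) r)) as Hle1.
    pose proof (Rle_abs (- (abs_pow (g x - t) r - abs_pow (z j - t) r))) as Hle2.
    rewrite Rabs_Ropp in Hle2. split; [|lra].
    apply Rmax_lub; [apply abs_pow_nonneg|lra].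
  - split; auto. eapply Rle_trans; [|apply Hlow].
    apply fsum_le; intros j Hj. apply Rmult_le_compat_r; [|apply Rmax_r].
    apply (outer_nonneg_Icc lo hi Hlh), (cell_subset lo hi m C HC j Hj).
Qed.

End StepError.

(** * Pairing [x] with its mirror image [2 xi - x] *)

Section MirrorPairs.
Variables lo hi : R.
Hypothesis Hlh : lo <= hi.
Let I := Icc lo hi.
Let xi := (lo + hi) / 2.
Variables (m : nat) (C : nat -> R -> Prop).
Hypothesis HC : measurable_partition I m C.

Lemma mirror_partition : measurable_partition I m (fun k => mirror xi (C k)).
Proof.
  split.
  - intros k Hk; apply measurable_mirror, HC, Hk.
  - intros i j x Hij; unfold mirror; apply HC, Hij.
  - intros x Hx; apply HC, Icc_mirror, Hx.
Qed.

Let pair_measure j k := outer (fun x => C j x /\ mirror xi (C k) x).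

Lemma pair_measure_sym j k : pair_measure j k = pair_measure k j.
Proof.
  unfold pair_measure. rewrite <- (outer_mirror xi (fun x => C k x /\ mirror xi (C j) x)).
  apply outer_ext; intro x; unfold mirror.
  replace (2 * xi - (2 * xi - x)) with x by ring. tauto.
Qed.

Lemma pair_measure_nonneg j k : (j < m)%nat -> 0 <= pair_measure j k.
Proof. intros Hj; apply (outer_nonneg_Icc lo hi Hlh); intros x [Hx _]; apply (cell_subset lo hi m C HC j Hj), Hx. Qed.

Lemma step_sum_mirror_pairs (h : nat -> R) :
  2 * fsum m (fun j => h j * outer (C j))
  = fsum m (fun j => fsum m (fun k => (h j + h k) * pair_measure j k)).
Proof.
  assert (Hrow : fsum m (fun j => h j * outer (C j))
                 = fsum m (fun j => fsum m (fun k => h j * pair_measure j k))).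
  { apply fsum_ext; intros j Hj. rewrite fsum_scal. f_equal.
    apply (outer_partition lo hi m _ _ mirror_partition), (cell_subset lo hi m C HC j Hj). }
  assert (Hcol : fsum m (fun j => h j * outer (C j))
                 = fsum m (fun j => fsum m (fun k => h k * pair_measure j k))).
  { rewrite Hrow, fsum_exchange. apply fsum_ext; intros j Hj; apply fsum_ext; intros k Hk.
    rewrite pair_measure_sym; reflexivity. }
  replace (2 * _) with (fsum m (fun j => h j * outer (C j)) + fsum m (fun j => h j * outer (C j))) by ring.
  rewrite Hrow at 1. rewrite Hcol, <- fsum_plus.
  apply fsum_ext; intros j Hj. rewrite <- fsum_plus. apply fsum_ext; intros; ring.
Qed.

Lemma outer_mirror_pairs A : subset A I ->
  outer A = fsum m (fun j => fsum m (fun k => outer (fun x => (A x /\ C j x) /\ mirror xi (C k) x))).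
Proof.
  intros HA. rewrite (outer_partition lo hi m C A HC HA).
  apply fsum_ext; intros j Hj. apply (outer_partition lo hi m _ _ mirror_partition).
  intros x [Hx _]; apply HA, Hx.
Qed.

Section Gain.
Variables (r s tau : R) (g : R -> R) (z : nat -> R) (N : R -> Prop).
Hypothesis Hr : 1 < r.
Hypothesis Hst : s <= tau.
Hypothesis Hz : forall j x, (j < m)%nat -> C j x -> z j <= g x.
Hypothesis Hpair : forall x, I x -> g x + g (2 * xi - x) <= 2 * s.
Hypothesis HN : subset N I.
Hypothesis HNs : forall x, N x -> g x <= s /\ g (2 * xi - x) <= s.
Let gain j := abs_pow (z j - tau) r - abs_pow (z j - s) r.

Lemma mirror_pair_gain j k : (j < m)%nat -> (k < m)%nat ->
  2 * abs_pow (tau - s) r * outer (fun x => (N x /\ C j x) /\ mirror xi (C k) x)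
  <= (gain j + gain k) * pair_measure j k.
Proof.
  intros Hj Hk. pose proof (pair_measure_nonneg j k Hj).
  pose proof (abs_pow_nonneg r (tau - s)).
  destruct (classic (exists x, (N x /\ C j x) /\ mirror xi (C k) x)) as [[x [[HNx Hcj] Hck]]|Hne].
  - (* near the centre both [z j] and [z k] lie below [s], so each gain is at least |tau - s|^r *)
    destruct (HNs x HNx) as [Hgx Hgy].
    pose proof (Hz j x Hj Hcj). pose proof (Hz k _ Hk Hck).
    pose proof (abs_pow_gap r Hr (z j) s tau ltac:(lra) Hst).
    pose proof (abs_pow_gap r Hr (z k) s tau ltac:(lra) Hst).
    assert (outer (fun x => (N x /\ C j x) /\ mirror xi (C k) x) <= pair_measure j k).
    { apply (outer_mono_Icc lo hi Hlh); [intros y [[_ Hy1] Hy2]; split; auto|].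
      intros y [Hy _]; apply (cell_subset lo hi m C HC j Hj), Hy. }
    unfold gain; nra.
  - rewrite outer_empty by (intros y Hy; apply Hne; eauto). rewrite Rmult_0_r.
    destruct (classic (exists x, C j x /\ mirror xi (C k) x)) as [[x [Hcj Hck]]|Hne2].
    + pose proof (Hz j x Hj Hcj). pose proof (Hz k _ Hk Hck).
      pose proof (Hpair x (cell_subset lo hi m C HC j Hj x Hcj)).
      pose proof (abs_pow_pair_le r Hr (z j) (z k) s tau Hst ltac:(unfold mirror in *; lra)).
      apply Rmult_le_pos; [unfold gain; lra|auto].
    + unfold pair_measure. rewrite outer_empty by (intros y Hy; apply Hne2; eauto). lra.
Qed.

Lemma step_sum_gain_ge :
  abs_pow (tau - s) r * outer N <= fsum m (fun j => gain j * outer (C j)).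
Proof.
  assert (2 * (abs_pow (tau - s) r * outer N) <= 2 * fsum m (fun j => gain j * outer (C j))); [|lra].
  rewrite step_sum_mirror_pairs, (outer_mirror_pairs N HN), <- Rmult_assoc, <- fsum_scal.
  apply fsum_le; intros j Hj.
  rewrite <- fsum_scal. apply fsum_le; intros k Hk.
  apply mirror_pair_gain; auto.
Qed.

End Gain.
End MirrorPairs.

(** * The one-sided estimate *)

Lemma small_mesh X Y : 0 <= X -> 0 < Y -> exists d, 0 < d <= 1 /\ 2 * X * d < Y.
Proof.
  intros HX HY. exists (Rmin 1 (Y / (4 * X + 1))). split; [split|].
  - apply Rmin_pos; [lra|]. apply Rdiv_lt_0_compat; lra.
  - apply Rmin_l.
  - assert (Hd : Rmin 1 (Y / (4 * X + 1)) * (4 * X + 1) <= Y).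
    { apply Rle_trans with (Y / (4 * X + 1) * (4 * X + 1)).
      - apply Rmult_le_compat_r; [lra|apply Rmin_r].
      - right; field; lra. }
    assert (0 < Rmin 1 (Y / (4 * X + 1))) by (apply Rmin_pos; [lra|apply Rdiv_lt_0_compat; lra]).
    nra.
Qed.

Lemma outer_centred_interval_ge lo hi rho : 0 < rho <= hi - lo ->
  rho <= outer (fun x => Icc lo hi x /\ Rabs (x - (lo + hi) / 2) < rho).
Proof.
  intros Hrho. set (xi := (lo + hi) / 2).
  replace rho with ((xi + rho / 2) - (xi - rho / 2)) at 1 by field.
  apply outer_ge_interval; [lra| |apply (cover_length_exists lo hi); [lra|intros x [Hx _]; auto]].
  intros x Hx; unfold Icc, xi in *; split; [lra|].
  unfold Rabs; destruct (Rcase_abs (x - (lo + hi) / 2)); lra.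
Qed.

(* Step sums bring [integral |g - tau|^r - integral |g - s|^r] within [2 Lam d lambda(I)] of the
   mirror-pair gain, which is at least [|tau - s|^r rho]; the mesh [d] is then chosen small. *)
Lemma integral_abs_pow_lt lo hi r g B s tau rho :
  lo < hi -> 1 < r -> s < tau -> 0 < rho <= hi - lo ->
  step_approx (Icc lo hi) g -> (forall x, Icc lo hi x -> Rabs (g x) <= B) ->
  (forall x, Icc lo hi x -> g x + g (2 * ((lo + hi) / 2) - x) <= 2 * s) ->
  (forall x, Icc lo hi x -> Rabs (x - (lo + hi) / 2) < rho -> g x <= s) ->
  integral (Icc lo hi) (fun x => abs_pow (g x - s) r)
  < integral (Icc lo hi) (fun x => abs_pow (g x - tau) r).
Proof.
  intros Hlh Hr Hst Hrho Happrox HB Hpair Hnear.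
  set (xi := (lo + hi) / 2) in *.
  set (phi0 := abs_pow (tau - s) r).
  assert (Hphi0 : 0 < phi0) by (unfold phi0; rewrite abs_pow_Rpower by lra; apply exp_pos).
  set (K := B + 1 + Rabs s + Rabs tau).
  set (Lam := r * Rpower K (r - 1)).
  assert (HL : 0 <= Lam) by apply (lipschitz_constant_nonneg r Hr).
  destruct (small_mesh (Lam * (hi - lo + 2)) (phi0 * rho)) as (d & Hd & Hdsmall).
  { apply Rmult_le_pos; lra. }
  { apply Rmult_lt_0_compat; lra. }
  destruct (Happrox d (proj1 Hd)) as (m & C & z & HC & Hz).
  set (N := fun x => Icc lo hi x /\ Rabs (x - xi) < rho).
  assert (HN : subset N (Icc lo hi)) by (intros x [Hx _]; auto).
  assert (HNrho : rho <= outer N) by exact (outer_centred_interval_ge lo hi rho Hrho).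
  assert (HNs : forall x, N x -> g x <= s /\ g (2 * xi - x) <= s).
  { intros x [Hx Hxr]. split; apply Hnear; auto.
    - apply (Icc_mirror lo hi), Hx.
    - replace (2 * xi - x - xi) with (- (x - xi)) by ring. rewrite Rabs_Ropp; auto. }
  pose proof (step_sum_gain_ge lo hi ltac:(lra) m C HC r s tau g z N Hr ltac:(lra)
                ltac:(intros j x Hj Hx; apply (Hz j x Hj Hx)) Hpair HN HNs) as Hgain.
  destruct (integral_abs_pow_step_bounds lo hi r ltac:(lra) Hr g B HB m C z d HC Hz Hd s K
              ltac:(unfold K; pose proof (Rabs_pos tau); lra)) as [_ Hs].
  destruct (integral_abs_pow_step_bounds lo hi r ltac:(lra) Hr g B HB m C z d HC Hz Hd tau K
              ltac:(unfold K; pose proof (Rabs_pos s); lra)) as [Htau _].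
  fold Lam in Hs, Htau.
  assert (Hsplit : fsum m (fun j => (abs_pow (z j - tau) r - Lam * d) * outer (C j))
                   - fsum m (fun j => (abs_pow (z j - s) r + Lam * d) * outer (C j))
                   = fsum m (fun j => (abs_pow (z j - tau) r - abs_pow (z j - s) r) * outer (C j))
                     - 2 * Lam * d * outer (Icc lo hi)).
  { rewrite (outer_partition lo hi m C (Icc lo hi) HC (fun x H => H)), <- fsum_scal, <- !fsum_minus.
    apply fsum_ext; intros j Hj.
    rewrite (outer_ext (fun x => Icc lo hi x /\ C j x) (C j)); [ring|].
    intro x; split; [tauto|]. intro Hx; split; auto. apply (cell_subset lo hi m C HC j Hj), Hx. }
  pose proof (outer_le_Icc lo hi ltac:(lra) (Icc lo hi) (fun x H => H)).
  assert (phi0 * rho <= phi0 * outer N) by (apply Rmult_le_compat_l; lra).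
  assert (Lam * d * outer (Icc lo hi) <= Lam * d * (hi - lo + 2))
    by (apply Rmult_le_compat_l; [apply Rmult_le_pos|]; lra).
  fold phi0 in Hgain. lra.
Qed.

Lemma abs_pow_minimizer_le lo hi r g B t0 a c tau :
  lo < hi -> 1 < r -> 0 <= c ->
  step_approx (Icc lo hi) g -> (forall x, Icc lo hi x -> Rabs (g x) <= B) ->
  (forall x, Icc lo hi x ->
     Rabs (g x - (t0 + a * (x - (lo + hi) / 2))) <= c * Rabs (x - (lo + hi) / 2)) ->
  abs_pow_integral_minimizer r (Icc lo hi) g tau ->
  tau <= t0 + / 2 * c * (hi - lo).
Proof.
  intros Hlh Hr Hc Happrox HB Hg Hmin.
  apply Rnot_lt_le; intro Hlt.
  set (xi := (lo + hi) / 2) in *.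
  set (delta := / 2 * c * (hi - lo)) in *.
  assert (Hdelta : 0 <= delta) by (unfold delta; apply Rmult_le_pos; [apply Rmult_le_pos|]; lra).
  set (mu := (tau - (t0 + delta)) / 2).
  set (s := t0 + delta + mu).
  set (A := Rabs a + c + 1).
  assert (HA : 0 < A) by (unfold A; pose proof (Rabs_pos a); lra).
  set (rho := Rmin (hi - lo) (mu / A)).
  assert (Hrho : 0 < rho <= hi - lo).
  { split; [apply Rmin_pos; [lra|apply Rdiv_lt_0_compat; unfold mu; lra]|apply Rmin_l]. }
  assert (HrhoA : rho * A <= mu).
  { apply Rle_trans with (mu / A * A); [apply Rmult_le_compat_r; [lra|apply Rmin_r]|].
    right; field; lra. }
  assert (Hup : forall x, Icc lo hi x -> g x <= t0 + a * (x - xi) + c * Rabs (x - xi)).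
  { intros x Hx; pose proof (Hg x Hx) as H.
    pose proof (Rle_abs (g x - (t0 + a * (x - xi)))); lra. }
  assert (Hdist : forall x, Icc lo hi x -> c * Rabs (x - xi) <= delta).
  { intros x Hx. unfold delta. replace (/ 2 * c * (hi - lo)) with (c * ((hi - lo) / 2)) by field.
    apply Rmult_le_compat_l; auto. unfold Icc, xi in *.
    unfold Rabs; destruct (Rcase_abs (x - (lo + hi) / 2)); lra. }
  assert (Hpair : forall x, Icc lo hi x -> g x + g (2 * xi - x) <= 2 * s).
  { intros x Hx.
    assert (Hx' : Icc lo hi (2 * xi - x)) by (apply (Icc_mirror lo hi), Hx).
    pose proof (Hup x Hx). pose proof (Hup _ Hx'). pose proof (Hdist x Hx).
    replace (2 * xi - x - xi) with (- (x - xi)) in * by ring. rewrite Rabs_Ropp in *.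
    unfold s, mu; lra. }
  assert (Hnear : forall x, Icc lo hi x -> Rabs (x - xi) < rho -> g x <= s).
  { intros x Hx Hnear.
    pose proof (Hup x Hx).
    assert (a * (x - xi) <= Rabs a * rho).
    { eapply Rle_trans; [apply Rle_abs|]. rewrite Rabs_mult.
      apply Rmult_le_compat_l; [apply Rabs_pos|lra]. }
    assert (c * Rabs (x - xi) <= c * rho) by (apply Rmult_le_compat_l; lra).
    unfold A in HrhoA. unfold s; lra. }
  pose proof (integral_abs_pow_lt lo hi r g B s tau rho Hlh Hr ltac:(unfold s, mu; lra)
                Hrho Happrox HB Hpair Hnear).
  specialize (Hmin s); lra.
Qed.

(** * Consequences of the linear envelope *)

Section Envelope.
Variables (lo hi a b c : R) (f : R -> R).
Hypothesis Hlh : lo < hi.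
Let xi := (lo + hi) / 2.
Hypothesis Henv : forall x, Icc lo hi x -> Rabs (f x - (a * x + b)) <= c * Rabs (x - xi).

Lemma envelope_coeff_nonneg : 0 <= c.
Proof.
  pose proof (Henv lo ltac:(unfold Icc; lra)) as H. pose proof (Rabs_pos (f lo - (a * lo + b))).
  replace (Rabs (lo - xi)) with ((hi - lo) / 2) in H by (unfold xi; rewrite Rabs_left by lra; field).
  apply Rmult_le_reg_r with ((hi - lo) / 2); lra.
Qed.

Lemma envelope_centred x : Icc lo hi x ->
  Rabs (f x - (f xi + a * (x - xi))) <= c * Rabs (x - xi).
Proof.
  assert (Hxi : f xi = a * xi + b).
  { pose proof (Henv xi ltac:(unfold Icc, xi; lra)) as H.
    rewrite Rminus_diag, Rabs_R0, Rmult_0_r in H.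
    apply Rminus_diag_uniq. destruct (Req_dec (f xi - (a * xi + b)) 0) as [|Hne]; auto.
    apply Rabs_no_R0 in Hne. pose proof (Rabs_pos (f xi - (a * xi + b))); lra. }
  intros Hx. rewrite Hxi. replace (a * xi + b + a * (x - xi)) with (a * x + b) by ring. auto.
Qed.

Lemma envelope_bounded : exists B, forall x, Icc lo hi x -> Rabs (f x) <= B.
Proof.
  exists (Rabs a * (Rabs lo + Rabs hi) + Rabs b + c * (hi - lo)). intros x Hx.
  pose proof envelope_coeff_nonneg. pose proof (Henv x Hx).
  assert (Rabs (x - xi) <= hi - lo)
    by (unfold Icc, xi in *; unfold Rabs; destruct (Rcase_abs (x - (lo + hi) / 2)); lra).
  assert (Rabs x <= Rabs lo + Rabs hi)
    by (unfold Icc in *; unfold Rabs; destruct (Rcase_abs x), (Rcase_abs lo), (Rcase_abs hi); lra).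
  assert (Rabs (a * x + b) <= Rabs a * Rabs x + Rabs b) by (rewrite <- Rabs_mult; apply Rabs_triang).
  assert (Rabs a * Rabs x <= Rabs a * (Rabs lo + Rabs hi)) by (apply Rmult_le_compat_l; [apply Rabs_pos|auto]).
  assert (c * Rabs (x - xi) <= c * (hi - lo)) by (apply Rmult_le_compat_l; auto).
  replace (f x) with ((f x - (a * x + b)) + (a * x + b)) by ring.
  eapply Rle_trans; [apply Rabs_triang|]. lra.
Qed.

End Envelope.

Theorem proposition4 (lo hi : R) (f : R -> R) (a b c : R) :
  lo < hi ->
  measurable_fun (Icc lo hi) f ->
  (forall x, Icc lo hi x ->
     Rabs (f x - (a * x + b)) <= c * Rabs (x - (lo + hi) / 2)) ->
  in_Linfty (Icc lo hi) f /\
  (forall r tau, 1 < r -> is_tau r (Icc lo hi) f tau ->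
     Rabs (tau - f ((lo + hi) / 2)) <= / 2 * c * (hi - lo)).
Proof.
  intros Hlh Hf Henv.
  pose proof (envelope_coeff_nonneg lo hi a b c f Hlh Henv) as Hc.
  pose proof (envelope_centred lo hi a b c f Hlh Henv) as Hcentred.
  destruct (envelope_bounded lo hi a b c f Hlh Henv) as [B HB].
  assert (Happrox : step_approx (Icc lo hi) f)
    by (apply (measurable_bounded_step_approx lo hi f B); auto; lra).
  split.
  - split; auto. exists B. apply outer_empty. intros x [Hx H]. specialize (HB x Hx); lra.
  - intros r tau Hr Htau.
    pose proof (is_tau_integral_minimizer lo hi r f B tau ltac:(lra) Hr HB Htau) as Hmin.
    apply Rabs_le; split.
    + enough (- tau <= - f ((lo + hi) / 2) + / 2 * c * (hi - lo)) by lra.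
      apply (abs_pow_minimizer_le lo hi r (fun x => - f x) B _ (- a) c (- tau) Hlh Hr Hc).
      * apply step_approx_opp, Happrox.
      * intros x Hx; rewrite Rabs_Ropp; auto.
      * intros x Hx. rewrite <- Rabs_Ropp.
        replace (- (- f x - (- f ((lo + hi) / 2) + - a * (x - (lo + hi) / 2))))
          with (f x - (f ((lo + hi) / 2) + a * (x - (lo + hi) / 2))) by ring.
        auto.
      * apply abs_pow_integral_minimizer_opp, Hmin.
    + enough (tau <= f ((lo + hi) / 2) + / 2 * c * (hi - lo)) by lra.
      apply (abs_pow_minimizer_le lo hi r f B _ a c tau Hlh Hr Hc Happrox HB); auto.
Qed.
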